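(* Let $s\ge2$, $k\ge1$ and $s_0$ be integers with $0\le s_0<\min\{k,s\}$. Let $n=sk+s_0$, $d_c=\lfloor n/s\rfloor=k$ and $d_o=\lfloor (n-1)/(s-1)\rfloor$, and define $$f(s,k,s_0)=\frac{\gamma_{MBR,c}}{\gamma_{MBR,o}}=\frac{\dfrac{d_c}{kd_c-\lfloor k/2\rfloor\lceil k/2\rceil}}{\dfrac{2d_o}{2kd_o-k^2+k}}.$$ Then $$f(s,k,s_0)\le\frac{2}{3}\cdot\frac{(s+3)k+s-3}{(s+1)k-1}.$$
   Context: $\gamma_{MBR,c}=\frac{d_cM}{kd_c-\lfloor k/2\rfloor\lceil k/2\rceil}$ is the minimum repair bandwidth (functional repair) of the Fixed Cluster Repair System with $s$ clusters, and $\gamma_{MBR,o}=\frac{2d_oM}{2kd_o-k^2+k}$ is the minimum-bandwidth-regenerating repair bandwidth of a standard regenerating code with repair degree $d_o$; the file size $M$ cancels in the ratio. *)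

From mathcomp Require Import all_boot all_order all_algebra.
Set Implicit Arguments. Unset Strict Implicit. Unset Printing Implicit Defensive.
Import Order.TTheory GRing.Theory Num.Theory.
Local Open Scope ring_scope.

Definition fcrs_n (s k s0 : nat) : nat := (s * k + s0)%N.
Definition fcrs_dc (s k s0 : nat) : nat := (fcrs_n s k s0 %/ s)%N.
Definition fcrs_do (s k s0 : nat) : nat := ((fcrs_n s k s0 - 1) %/ (s - 1))%N.

(* gamma_MBR,c / M = d_c / (k d_c - floor(k/2) ceil(k/2)) *)
Definition gamma_c (s k s0 : nat) : rat :=
  let dc := fcrs_dc s k s0 in
  (dc%:R) / ((k * dc)%:R - ((k %/ 2)%N * uphalf k)%:R).

(* gamma_MBR,o / M = 2 d_o / (2 k d_o - k^2 + k) *)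
Definition gamma_o (s k s0 : nat) : rat :=
  let d := fcrs_do s k s0 in
  (2 * d%:R) / (2 * k%:R * d%:R - (k%:R)^+2 + k%:R).

Definition f_ratio (s k s0 : nat) : rat := gamma_c s k s0 / gamma_o s k s0.

(** Since [s0 < s], the cluster repair degree is [d_c = k]; write [q = d_o >= k] and
    [A = floor(k/2) ceil(k/2) <= k^2/4].  The ratio equals
    [k^2 / (2 (k^2 - A)) * (2 - (k - 1)/q)], and the first factor is at most [2/3].
    The bound equals [2/3 (2 - (s - 1)(k - 1)/((s + 1)k - 1))], so it remains to see
    [(s - 1) q <= (s + 1) k - 1], which follows from [(s - 1) q <= n - 1] and [s0 < k]. *)

From mathcomp Require Import all_boot all_order all_algebra.
From mathcomp Require Import zify ring lra.
Import Order.TTheory GRing.Theory Num.Theory.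
Local Open Scope ring_scope.

Lemma half_uphalf_AGM (n : nat) : (4 * (n./2 * uphalf n) <= n ^ 2)%N.
Proof.
have n_split : (n./2 + uphalf n)%N = n.
  by rewrite uphalf_half addnCA addnn odd_double_half.
by rewrite -[in X in (_ <= X)%N]n_split nat_AGM2.
Qed.

Section FcrsDegrees.

Variables s k s0 : nat.

Lemma fcrs_dcE : (s0 < s)%N -> fcrs_dc s k s0 = k.
Proof.
move=> lt_s0_s; rewrite /fcrs_dc /fcrs_n mulnC divnMDl; last lia.
by rewrite divn_small // addn0.
Qed.

Lemma leq_fcrs_do : (2 <= s)%N -> (1 <= k)%N -> (k <= fcrs_do s k s0)%N.
Proof. by move=> s_ge2 k_gt0; rewrite /fcrs_do /fcrs_n leq_divRL; lia. Qed.

Lemma fcrs_do_mul_le : (s0 < k)%N -> (fcrs_do s k s0 * (s - 1) <= (s + 1) * k - 1)%N.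
Proof.
move=> lt_s0_k; apply: leq_trans (leq_divM _ _) _.
rewrite /fcrs_n; lia.
Qed.

End FcrsDegrees.

Section RatioBound.

Context {R : realFieldType}.
Implicit Types k q s a : R.

Lemma mbr_ratio_le_two_thirds k q a : 1 <= k -> k <= q -> 0 <= a -> 4 * a <= k ^+ 2 ->
  k / (k * k - a) / (2 * q / (2 * k * q - k ^+ 2 + k)) <= 2 / 3 * (2 - (k - 1) / q).
Proof.
move=> k_ge1 le_kq a_ge0 a_le.
have q_gt0 : 0 < q by lra.
have den_gt0 : 0 < k * k - a by rewrite -expr2; nra.
have -> : k / (k * k - a) / (2 * q / (2 * k * q - k ^+ 2 + k)) =
    k ^+ 2 / (2 * (k * k - a)) * (2 - (k - 1) / q).
  by field; rewrite ?gt_eqF //; nra.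
have rest_gt0 : 0 < 2 - (k - 1) / q by rewrite subr_gt0 ltr_pdivrMr //; lra.
rewrite ler_pM2r // ler_pdivrMr; last lra.
rewrite -expr2 in den_gt0 *; lra.
Qed.

Lemma two_sub_divr_le k q s : 1 <= k -> 1 <= s -> 0 < q -> (s - 1) * q <= (s + 1) * k - 1 ->
  2 - (k - 1) / q <= ((s + 3) * k + s - 3) / ((s + 1) * k - 1).
Proof.
move=> k_ge1 s_ge1 q_gt0 le_q.
have den_gt0 : 0 < (s + 1) * k - 1 by nra.
have -> : ((s + 3) * k + s - 3) / ((s + 1) * k - 1) =
    2 - (s - 1) * (k - 1) / ((s + 1) * k - 1).
  by field; rewrite gt_eqF.
rewrite lerD2l lerN2 ler_pdivrMr // mulrAC ler_pdivlMr //.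
by rewrite mulrAC [leRHS]mulrC ler_wpM2r // subr_ge0.
Qed.

End RatioBound.

Theorem proposition1 (s k s0 : nat) :
  (2 <= s)%N -> (1 <= k)%N -> (s0 < minn k s)%N ->
  f_ratio s k s0 <=
    (2%:R / 3%:R) * ((((s + 3) * k + s)%:R - 3%:R) / (((s + 1) * k)%:R - 1)).
Proof.
move=> s_ge2 k_ge1; rewrite leq_min => /andP[lt_s0_k lt_s0_s].
rewrite /f_ratio /gamma_c /gamma_o fcrs_dcE //.
have le_kq := leq_fcrs_do s k s0 s_ge2 k_ge1.
have le_q := fcrs_do_mul_le s k s0 lt_s0_k.
have le_a := half_uphalf_AGM k; rewrite -divn2 in le_a.
set q := fcrs_do s k s0 in le_kq le_q *; set a := (k %/ 2 * uphalf k)%N in le_a *.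
clearbody q a.
have k_ge1' : 1 <= k%:R :> rat by rewrite ler1n.
have s_ge1 : 1 <= s%:R :> rat by rewrite ler1n ltnW.
have le_kq' : k%:R <= q%:R :> rat by rewrite ler_nat.
have le_a' : 4 * a%:R <= k%:R ^+ 2 :> rat by rewrite -natrX -natrM ler_nat.
have le_q' : (s%:R - 1) * q%:R <= (s%:R + 1) * k%:R - 1 :> rat.
  by move: le_q; rewrite -(ler_nat rat) mulrC natrM !natrB ?natrM ?natrD //; lia.
rewrite !(natrM, natrD).
apply: le_trans (mbr_ratio_le_two_thirds _ _ _ k_ge1' le_kq' (ler0n _ a) le_a') _.
by rewrite ler_pM2l // two_sub_divr_le //; lra.
Qed.
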